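(* Let $\delta_x,\delta_t>0$, let $T_x,T_t$ be the shift operators $T_xf(x,t)=f(x+\delta_x,t)$, $T_tf(x,t)=f(x,t+\delta_t)$, and let $\Delta_x=(T_x-1)/\delta_x$, $\Delta_t=(T_t-1)/\delta_t$. Consider the discrete heat equation $$\Delta_t\phi-(\Delta_x)^2\phi=0,$$ and the discrete Burgers equation for $u(x,t)$, $$\Delta_t u=\frac{1+\delta_x u}{1+\delta_t v}\,\Delta_x v,\qquad v=\Delta_x u+u\,T_xu,$$ which are related by the discrete Cole–Hopf transformation $\Delta_x\phi=u\phi$ (so that $\Delta_t\phi=v\phi$). Let $S$ be a linear operator (a finite combination of products of powers of $T_x^{\pm1},T_t^{\pm1}$ with coefficients depending on $x,t$) such that the flow $\phi_\lambda=S\phi$ is a symmetry (commuting flow) of the discrete heat equation. Then the same operator $S$ yields a symmetry of the discrete Burgers equation whose flow is $$u_\lambda=(1+\delta_x u)\,\Delta_x\!\Big(\frac{S\phi}{\phi}\Big),$$ where $S\phi/\phi$ can be expressed in terms of $u(x,t)$ and its shifted values alone.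
   Context: A symmetry (commuting flow) of a difference equation on the fixed lattice is an evolution $\partial w/\partial\lambda=Q$ in an auxiliary parameter $\lambda$ compatible with the equation, i.e. taking solutions to solutions; $\phi_\lambda$, $u_\lambda$ denote $\partial\phi/\partial\lambda$, $\partial u/\partial\lambda$. Here $\phi$ is assumed nonvanishing so that $u=\Delta_x\phi/\phi$ is defined. *)

From Stdlib Require Import Reals ZArith List.
From Coquelicot Require Import Coquelicot.
Open Scope R_scope.

(* Fields on the fixed lattice: (m,n) : Z*Z stands for (x0 + m dx, t0 + n dt). *)
Definition field := Z -> Z -> R.

Definition Tx (f : field) : field := fun m n => f (m + 1)%Z n.
Definition Tt (f : field) : field := fun m n => f m (n + 1)%Z.
Definition Dx (dx : R) (f : field) : field := fun m n => (Tx f m n - f m n) / dx.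
Definition Dt (dt : R) (f : field) : field := fun m n => (Tt f m n - f m n) / dt.

Definition heat (dx dt : R) (phi : field) : field :=
  fun m n => Dt dt phi m n - Dx dx (Dx dx phi) m n.

Definition burgers_v (dx : R) (u : field) : field :=
  fun m n => Dx dx u m n + u m n * Tx u m n.
Definition burgers (dx dt : R) (u : field) : field :=
  fun m n => Dt dt u m n
    - (1 + dx * u m n) / (1 + dt * burgers_v dx u m n) * Dx dx (burgers_v dx u) m n.

(* Burgers fields for which the equation is well defined (denominators nonzero),
   i.e. Tx phi/phi and Tt phi/phi are nonzero. *)
Definition burgers_nondeg (dx dt : R) (u : field) : Prop :=
  forall m n, 1 + dx * u m n <> 0 /\ 1 + dt * burgers_v dx u m n <> 0.

Definition cole_hopf (dx : R) (phi : field) : field := fun m n => Dx dx phi m n / phi m n.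

(* Linear operator S = sum_k c_k(x,t) Tx^{i_k} Tt^{j_k}, (i_k, j_k) in Z*Z. *)
Definition lin_op := list (Z * Z * field).
Definition apply_op (S : lin_op) (f : field) : field :=
  fun m n => fold_right
    (fun (p : Z * Z * field) acc => let '(i, j, c) := p in c m n * f (m + i)%Z (n + j)%Z + acc)
    0 S.

(* Symmetry (commuting flow) w_lambda = Q[w] of the equation E[w] = 0, restricted
   to the admissible fields D: the equation linearised along Q vanishes on solutions. *)
Definition is_symmetry (E : field -> field) (Q : field -> field) (D : field -> Prop) : Prop :=
  forall w, D w -> (forall m n, E w m n = 0) ->
    forall m n, is_derive (fun eps => E (fun m' n' => w m' n' + eps * Q w m' n') m n) 0 0.

(* Ratio  (Tx^i Tt^j phi)/phi  expressed in u alone, using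
   Tx phi / phi = 1 + dx u and Tt phi / phi = 1 + dt v. *)
Fixpoint prod_up (a : Z -> R) (k : Z) (len : nat) : R :=
  match len with O => 1 | S l => a k * prod_up a (k + 1)%Z l end.
Definition shift_ratio (a : Z -> R) (i : Z) : R :=
  if (0 <=? i)%Z then prod_up a 0 (Z.to_nat i) else / prod_up a i (Z.to_nat (- i)).
Definition shift_ratio_u (dx dt : R) (u : field) (i j : Z) : field :=
  fun m n =>
    shift_ratio (fun k => 1 + dx * u (m + k)%Z n) i *
    shift_ratio (fun k => 1 + dt * burgers_v dx u (m + i)%Z (n + k)%Z) j.

(* S phi / phi written in terms of u and its shifts *)
Definition S_ratio_u (dx dt : R) (S : lin_op) (u : field) : field :=
  fun m n => fold_right
    (fun (p : Z * Z * field) acc => let '(i, j, c) := p in c m n * shift_ratio_u dx dt u i j m n + acc)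
    0 S.

Definition burgers_flow (dx dt : R) (S : lin_op) (u : field) : field :=
  fun m n => (1 + dx * u m n) * Dx dx (S_ratio_u dx dt S u) m n.

From Pilot Require Import Defs.
From Stdlib Require Import Reals ZArith List Lra Lia FunctionalExtensionality.
From Coquelicot Require Import Coquelicot.
Open Scope R_scope.

(* The Cole–Hopf map phi |-> Dx phi / phi sends nonvanishing heat solutions onto the
   nondegenerate Burgers solutions: 1 + dx u = Tx phi / phi and 1 + dt v = Tt phi / phi,
   and the Burgers equation is exactly the compatibility condition that lets these
   ratios be multiplied out along the lattice into a potential phi.  The same telescoping
   products express Tx^i Tt^j phi / phi, hence S phi / phi, through u alone.  Since the
   heat equation is linear, psi = S phi solves it as well, so phi + e psi is a heat
   solution whose Cole–Hopf image solves Burgers for every small e; its derivative at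
   e = 0 is (1 + dx u) Dx (psi / phi), which is therefore a symmetry of Burgers. *)

Lemma prod_up_last (a : Z -> R) (k : Z) (l : nat) :
  prod_up a k (S l) = prod_up a k l * a (k + Z.of_nat l)%Z.
Proof.
  revert k; induction l as [|l IH]; intros k; simpl.
  - rewrite Z.add_0_r; ring.
  - simpl in IH; rewrite IH.
    replace (k + Z.pos (Pos.of_succ_nat l))%Z with (k + 1 + Z.of_nat l)%Z by lia.
    ring.
Qed.

Lemma prod_up_neq0 (a : Z -> R) (k : Z) (l : nat) :
  (forall k, a k <> 0) -> prod_up a k l <> 0.
Proof.
  intros Ha; revert k; induction l as [|l IH]; intros k; simpl.
  - lra.
  - apply Rmult_integral_contrapositive_currified; auto.
Qed.

Lemma shift_ratio_neq0 (a : Z -> R) (i : Z) :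
  (forall k, a k <> 0) -> shift_ratio a i <> 0.
Proof.
  intros Ha; unfold shift_ratio; destruct (0 <=? i)%Z.
  - now apply prod_up_neq0.
  - now apply Rinv_neq_0_compat, prod_up_neq0.
Qed.

Lemma shift_ratio_succ (a : Z -> R) (i : Z) :
  (forall k, a k <> 0) -> shift_ratio a (i + 1) = shift_ratio a i * a i.
Proof.
  intros Ha; unfold shift_ratio.
  destruct (Z.leb_spec 0 i) as [Hi|Hi].
  - destruct (Z.leb_spec 0 (i + 1)) as [_|Hi1]; [|lia].
    replace (Z.to_nat (i + 1)) with (S (Z.to_nat i)) by lia.
    rewrite prod_up_last, Z2Nat.id by lia; reflexivity.
  - destruct (Z.eq_dec i (-1)) as [->|Hne].
    + simpl; field; apply Ha.
    + destruct (Z.leb_spec 0 (i + 1)) as [Hi1|_]; [lia|].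
      replace (Z.to_nat (- i)) with (S (Z.to_nat (- (i + 1)))) by lia.
      simpl; field; split; [now apply prod_up_neq0 | apply Ha].
Qed.

Lemma shift_ratio_telescope (a f : Z -> R) (i : Z) :
  (forall k, f k <> 0) -> (forall k, a k = f (k + 1)%Z / f k) ->
  shift_ratio a i = f i / f 0%Z.
Proof.
  intros Hf Ha.
  assert (Ha0 : forall k, a k <> 0).
  { intros k; rewrite Ha; apply Rmult_integral_contrapositive_currified; auto.
    now apply Rinv_neq_0_compat. }
  induction i as [|i IH|i IH] using Z.peano_ind.
  - unfold shift_ratio; simpl; field; auto.
  - unfold Z.succ; rewrite shift_ratio_succ, IH, Ha by auto.
    field; auto.
  - apply (Rmult_eq_reg_r (a (Z.pred i))); [|auto].
    rewrite <- shift_ratio_succ, Ha by auto.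
    replace (Z.pred i + 1)%Z with i by lia.
    rewrite IH; field; auto.
Qed.

Lemma heat_affine (dx dt : R) (w q : field) (e : R) (m n : Z) :
  heat dx dt (fun m' n' => w m' n' + e * q m' n') m n
  = heat dx dt w m n + e * heat dx dt q m n.
Proof. unfold heat, Defs.Dt, Defs.Dx, Defs.Tt, Defs.Tx, Rdiv; ring. Qed.

Lemma heat_symmetry_solution (dx dt : R) (Q : field -> field) (phi : field) :
  is_symmetry (heat dx dt) Q (fun _ => True) ->
  (forall m n, heat dx dt phi m n = 0) ->
  forall m n, heat dx dt (Q phi) m n = 0.
Proof.
  intros HQ Hphi m n.
  assert (Hline : is_derive (fun e => heat dx dt phi m n + e * heat dx dt (Q phi) m n) 0
                    (heat dx dt (Q phi) m n)) by (auto_derive; [exact I | ring]).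
  assert (Hzero := HQ phi I Hphi m n).
  apply (is_derive_ext _ _ _ _ (fun e => heat_affine dx dt phi (Q phi) e m n)) in Hzero.
  rewrite <- (is_derive_unique _ _ _ Hline); exact (is_derive_unique _ _ _ Hzero).
Qed.

Section ColeHopf.

Variables dx dt : R.
Hypothesis dx_neq0 : dx <> 0.
Hypothesis dt_neq0 : dt <> 0.

(* The derivative of [cole_hopf dx (phi + e * psi)] at [e = 0]. *)
Definition cole_hopf_variation (phi psi : field) : field := fun m n =>
  (1 + dx * cole_hopf dx phi m n) * Defs.Dx dx (fun m' n' => psi m' n' / phi m' n') m n.

Definition heat_step (x y z : R) : R := x + dt * ((z - y) / dx - (y - x) / dx) / dx.

Lemma heat_time_step (phi : field) (m n : Z) :
  heat dx dt phi m n = 0 ->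
  phi m (n + 1)%Z = heat_step (phi m n) (phi (m + 1)%Z n) (phi (m + 1 + 1)%Z n).
Proof.
  unfold heat, Defs.Dt, Defs.Dx, Defs.Tt, Defs.Tx, heat_step; intros H.
  apply Rminus_diag_uniq in H.
  replace (phi m (n + 1)%Z) with (phi m n + dt * ((phi m (n + 1)%Z - phi m n) / dt))
    by (field; exact dt_neq0).
  rewrite H; field; exact dx_neq0.
Qed.

Lemma cole_hopf_space_ratio (phi : field) (m n : Z) :
  phi m n <> 0 -> 1 + dx * cole_hopf dx phi m n = phi (m + 1)%Z n / phi m n.
Proof. intros; unfold cole_hopf, Defs.Dx, Defs.Tx; field; auto. Qed.

Lemma cole_hopf_time_ratio (phi : field) (m n : Z) :
  (forall m n, phi m n <> 0) -> heat dx dt phi m n = 0 ->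
  1 + dt * burgers_v dx (cole_hopf dx phi) m n = phi m (n + 1)%Z / phi m n.
Proof.
  intros Hphi H; rewrite (heat_time_step _ _ _ H).
  unfold heat_step, burgers_v, cole_hopf, Defs.Dx, Defs.Tx; field; auto.
Qed.

Section HeatSolution.

Variable phi : field.
Hypothesis phi_neq0 : forall m n, phi m n <> 0.
Hypothesis phi_heat : forall m n, heat dx dt phi m n = 0.

Lemma shift_ratio_u_cole_hopf (i j m n : Z) :
  shift_ratio_u dx dt (cole_hopf dx phi) i j m n = phi (m + i)%Z (n + j)%Z / phi m n.
Proof.
  unfold shift_ratio_u.
  rewrite (shift_ratio_telescope _ (fun k => phi (m + k)%Z n)),
    (shift_ratio_telescope _ (fun k => phi (m + i)%Z (n + k)%Z)), !Z.add_0_r; auto.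
  - field; auto.
  - intros k; rewrite cole_hopf_time_ratio, Z.add_assoc; auto.
  - intros k; rewrite cole_hopf_space_ratio, Z.add_assoc; auto.
Qed.

Lemma S_ratio_u_cole_hopf (S : lin_op) (m n : Z) :
  S_ratio_u dx dt S (cole_hopf dx phi) m n = apply_op S phi m n / phi m n.
Proof.
  unfold S_ratio_u, apply_op; induction S as [|[[i j] c] S IH]; simpl.
  - field; auto.
  - rewrite IH, shift_ratio_u_cole_hopf; field; auto.
Qed.

Lemma burgers_flow_cole_hopf (S : lin_op) :
  burgers_flow dx dt S (cole_hopf dx phi) = cole_hopf_variation phi (apply_op S phi).
Proof.
  apply functional_extensionality; intros m; apply functional_extensionality; intros n.
  unfold burgers_flow, cole_hopf_variation, Defs.Dx, Defs.Tx.
  now rewrite !S_ratio_u_cole_hopf.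
Qed.

End HeatSolution.
End ColeHopf.

Lemma burgers_ratio_compat (dx dt : R) (u : field) (m n : Z) :
  dx <> 0 -> dt <> 0 -> 1 + dt * burgers_v dx u m n <> 0 -> burgers dx dt u m n = 0 ->
  (1 + dx * u m (n + 1)%Z) * (1 + dt * burgers_v dx u m n)
  = (1 + dt * burgers_v dx u (m + 1)%Z n) * (1 + dx * u m n).
Proof.
  intros Hdx Hdt Hv Hb; apply Rminus_diag_uniq.
  unfold burgers, Defs.Dt, Defs.Dx, Defs.Tt, Defs.Tx in Hb.
  set (a := u m n) in *; set (b := u m (n + 1)%Z) in *.
  set (v := burgers_v dx u m n) in *; set (v' := burgers_v dx u (m + 1)%Z n) in *.
  transitivity (dt * dx * (1 + dt * v)
    * ((b - a) / dt - (1 + dx * a) / (1 + dt * v) * ((v' - v) / dx))).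
  - field; auto.
  - rewrite Hb; ring.
Qed.

Section InverseColeHopf.

Variables dx dt : R.
Hypothesis dx_neq0 : dx <> 0.
Hypothesis dt_neq0 : dt <> 0.
Variable u : field.
Hypothesis u_nondeg : burgers_nondeg dx dt u.
Hypothesis u_burgers : forall m n, burgers dx dt u m n = 0.

Let space_ratio_neq0 m n : 1 + dx * u m n <> 0 := proj1 (u_nondeg m n).
Let time_ratio_neq0 m n : 1 + dt * burgers_v dx u m n <> 0 := proj2 (u_nondeg m n).

(* Integrate [Tt phi / phi = 1 + dt v] up the column [m = 0], then
   [Tx phi / phi = 1 + dx u] along each row. *)
Definition cole_hopf_potential : field := fun m n =>
  shift_ratio (fun k => 1 + dt * burgers_v dx u 0%Z k) n * shift_ratio (fun k => 1 + dx * u k n) m.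

Lemma cole_hopf_potential_neq0 (m n : Z) : cole_hopf_potential m n <> 0.
Proof.
  apply Rmult_integral_contrapositive_currified; apply shift_ratio_neq0; auto.
Qed.

Lemma cole_hopf_potential_shift_x (m n : Z) :
  cole_hopf_potential (m + 1)%Z n = (1 + dx * u m n) * cole_hopf_potential m n.
Proof.
  unfold cole_hopf_potential; rewrite shift_ratio_succ; auto; ring.
Qed.

Lemma cole_hopf_potential_shift_t (m n : Z) :
  cole_hopf_potential m (n + 1)%Z = (1 + dt * burgers_v dx u m n) * cole_hopf_potential m n.
Proof.
  induction m as [|m IH|m IH] using Z.peano_ind.
  - unfold cole_hopf_potential; rewrite shift_ratio_succ by auto.
    unfold shift_ratio; simpl; ring.
  - unfold Z.succ; rewrite !cole_hopf_potential_shift_x, IH, <- Rmult_assoc,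
      burgers_ratio_compat by auto.
    ring.
  - replace m with (Z.pred m + 1)%Z in IH by lia.
    rewrite !cole_hopf_potential_shift_x, <- Rmult_assoc, <- burgers_ratio_compat,
      Rmult_assoc in IH by auto.
    apply Rmult_eq_reg_l in IH; [exact IH | auto].
Qed.

Lemma cole_hopf_potential_inverse : cole_hopf dx cole_hopf_potential = u.
Proof.
  apply functional_extensionality; intros m; apply functional_extensionality; intros n.
  unfold cole_hopf, Defs.Dx, Defs.Tx; rewrite cole_hopf_potential_shift_x.
  field; auto using cole_hopf_potential_neq0.
Qed.

Lemma heat_cole_hopf_potential (m n : Z) : heat dx dt cole_hopf_potential m n = 0.
Proof.
  unfold heat, Defs.Dt, Defs.Dx, Defs.Tt, Defs.Tx.
  rewrite cole_hopf_potential_shift_t, !cole_hopf_potential_shift_x.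
  unfold burgers_v, Defs.Dx, Defs.Tx; field; auto.
Qed.

End InverseColeHopf.

Lemma burgers_solution_cole_hopf (dx dt : R) (u : field) :
  dx <> 0 -> dt <> 0 -> burgers_nondeg dx dt u -> (forall m n, burgers dx dt u m n = 0) ->
  exists phi, (forall m n, phi m n <> 0) /\ (forall m n, heat dx dt phi m n = 0)
              /\ u = cole_hopf dx phi.
Proof.
  intros Hdx Hdt Hnd Hb; exists (cole_hopf_potential dx dt u); repeat split.
  - apply cole_hopf_potential_neq0; auto.
  - apply heat_cole_hopf_potential; auto.
  - symmetry; apply cole_hopf_potential_inverse; auto.
Qed.

Definition cole_hopf_at (dx x y : R) : R := (y - x) / dx / x.
Definition flow_at (dx x y s t : R) : R := (1 + dx * cole_hopf_at dx x y) * ((t / y - s / x) / dx).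
Definition burgers_at (dx dt a b c d : R) : R :=
  let v := (c - a) / dx + a * c in
  let v' := (d - c) / dx + c * d in
  (b - a) / dt - (1 + dx * a) / (1 + dt * v) * ((v' - v) / dx).

(* A symbolic check of the chain-rule argument: [burgers_at] vanishes on the Cole–Hopf
   image of the heat solution [p + e s], and [flow_at] is the derivative of that image
   at [e = 0]. *)
Lemma burgers_at_flow_derivative (dx dt p0 p1 p2 p3 s0 s1 s2 s3 q0 q1 r0 r1 : R) :
  dx <> 0 -> dt <> 0 -> p0 <> 0 -> p1 <> 0 -> p2 <> 0 -> p3 <> 0 -> q0 <> 0 -> q1 <> 0 ->
  q0 = heat_step dx dt p0 p1 p2 -> q1 = heat_step dx dt p1 p2 p3 ->
  r0 = heat_step dx dt s0 s1 s2 -> r1 = heat_step dx dt s1 s2 s3 ->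
  is_derive (fun e => burgers_at dx dt
      (cole_hopf_at dx p0 p1 + e * flow_at dx p0 p1 s0 s1)
      (cole_hopf_at dx q0 q1 + e * flow_at dx q0 q1 r0 r1)
      (cole_hopf_at dx p1 p2 + e * flow_at dx p1 p2 s1 s2)
      (cole_hopf_at dx p2 p3 + e * flow_at dx p2 p3 s2 s3)) 0 0.
Proof.
  intros Hdx Hdt H0 H1 H2 H3 Hq0 Hq1 -> -> -> ->.
  (* the form in which [field] requests the nonvanishing of [q0] and [q1] *)
  assert (Hscaled : forall x y z, heat_step dx dt x y z <> 0 ->
                      x * (dx * dx) + dt * (z - y - (y - x)) <> 0).
  { intros x y z Hxyz Hz; apply Hxyz.
    replace (heat_step dx dt x y z) with ((x * (dx * dx) + dt * (z - y - (y - x))) / (dx * dx))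
      by (unfold heat_step; field; exact Hdx).
    rewrite Hz; unfold Rdiv; ring. }
  pose proof (Hscaled _ _ _ Hq0); pose proof (Hscaled _ _ _ Hq1).
  (* [1 + dt v = Tt phi / phi], in the normal form produced by [auto_derive] *)
  assert (Hv : 1 + dt * (((p2 - p1) / dx / p1 + - ((p1 - p0) / dx / p0)) * / dx
                         + (p1 - p0) / dx / p0 * ((p2 - p1) / dx / p1))
               = heat_step dx dt p0 p1 p2 / p0)
    by (unfold heat_step; field; auto).
  unfold burgers_at, flow_at, cole_hopf_at.
  auto_derive; rewrite ?Rmult_0_l, ?Rplus_0_r, Hv.
  - apply Rmult_integral_contrapositive_currified; auto using Rinv_neq_0_compat.
  - unfold heat_step; field; tauto.
Qed.

Lemma burgers_cole_hopf_variation (dx dt : R) (phi psi : field) (m n : Z) :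
  dx <> 0 -> dt <> 0 -> (forall m n, phi m n <> 0) ->
  (forall m n, heat dx dt phi m n = 0) -> (forall m n, heat dx dt psi m n = 0) ->
  is_derive (fun e => burgers dx dt
    (fun m' n' => cole_hopf dx phi m' n' + e * cole_hopf_variation dx phi psi m' n') m n) 0 0.
Proof.
  intros Hdx Hdt Hphi0 Hphi Hpsi.
  eapply is_derive_ext;
    [| apply (burgers_at_flow_derivative dx dt
                (phi m n) (phi (m + 1)%Z n) (phi (m + 1 + 1)%Z n) (phi (m + 1 + 1 + 1)%Z n)
                (psi m n) (psi (m + 1)%Z n) (psi (m + 1 + 1)%Z n) (psi (m + 1 + 1 + 1)%Z n)
                (phi m (n + 1)%Z) (phi (m + 1)%Z (n + 1)%Z)
                (psi m (n + 1)%Z) (psi (m + 1)%Z (n + 1)%Z));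
       auto using heat_time_step].
  reflexivity.
Qed.

Theorem theorem5p4 (dx dt : R) (S : lin_op) :
  0 < dx -> 0 < dt ->
  is_symmetry (heat dx dt) (apply_op S) (fun _ => True) ->
  (forall phi : field,
      (forall m n, phi m n <> 0) ->
      (forall m n, heat dx dt phi m n = 0) ->
      forall m n, S_ratio_u dx dt S (cole_hopf dx phi) m n = apply_op S phi m n / phi m n)
  /\ is_symmetry (burgers dx dt) (burgers_flow dx dt S) (burgers_nondeg dx dt).
Proof.
  intros Hdx Hdt HS.
  assert (Hdx0 : dx <> 0) by lra; assert (Hdt0 : dt <> 0) by lra.
  split.
  - intros phi Hphi0 Hphi m n; now apply S_ratio_u_cole_hopf.
  - intros u Hnd Hu m n.
    destruct (burgers_solution_cole_hopf dx dt u Hdx0 Hdt0 Hnd Hu) as (phi & Hphi0 & Hphi & ->).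
    rewrite burgers_flow_cole_hopf by auto.
    apply burgers_cole_hopf_variation; auto.
    now apply heat_symmetry_solution.
Qed.
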